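(* Consider a $d$-regular simple graph ($d\ge3$) on $B$ bonds, quantised with unitary vertex scattering matrices without back-scattering (all diagonal entries zero). Let $T$ be a positive integer, $\kappa>0$, and $f\in\mathbb{C}^{2B}$ with $|f_b|\le\kappa$ for each $b$ and $\mathrm{Tr}\,\mathrm{Op}(f)=\sum_bf_b=0$. Then there is a constant $c$ depending only on $d$ such that $$V(f,B)\le\frac1{2BT}\sum_{b}|f_b|^2+\frac1B\sum_{t=1}^T\hat w_T(t)\Big(\langle f,M^tf\rangle_{\mathbb{C}^{2B}}+c\,\kappa^2(d-1)^t|\mathcal{C}_{B,2T}|\Big).$$
   Context: Directed bonds, $o(b)$, $t(b)$, vertex matrices $\sigma_v$, the bond scattering matrix $S$ ($S_{bc}=0$ unless $t(b)=o(c)$, otherwise the entry of $\sigma_{t(b)}$ in the row of the bond of $c$ and column of the bond of $b$) and $U(k)_{bc}=e^{ikL_b}S_{bc}$ are as usual for quantum graphs with bond lengths $L_b>0$. $M_{bc}=|S_{bc}|^2$. $\mathrm{Op}(f)=\mathrm{diag}(f)$, $\langle x,y\rangle=\sum\bar x_iy_i$. With $\{\phi_j(k)\}$ an orthonormal eigenbasis of $U(k)$, $V(f,B)=\frac1{2B}\lim_{K\to\infty}\frac1K\int_0^K\sum_{j=1}^{2B}|\langle\phi_j(k),\mathrm{Op}(f)\phi_j(k)\rangle-\frac1{2B}\mathrm{Tr}\,\mathrm{Op}(f)|^2dk$. $\hat w_T(t)=\frac1T(1-\frac{|t|}T)$ for $|t|<T$ and $0$ otherwise. A cycle is a closed path without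 back-tracking; $\mathcal{C}_{B,t}$ is the set of bonds on a cycle of length at most $t$. *)

From Stdlib Require Import Reals Lra Lia Arith List ClassicalEpsilon.
Import ListNotations.
Open Scope R_scope.

Record Cplx := mkC { re : R; im : R }.
Definition C0 : Cplx := mkC 0 0.
Definition C1 : Cplx := mkC 1 0.
Definition CR (r : R) : Cplx := mkC r 0.
Definition Cadd (x y : Cplx) : Cplx := mkC (re x + re y) (im x + im y).
Definition Csub (x y : Cplx) : Cplx := mkC (re x - re y) (im x - im y).
Definition Cmul (x y : Cplx) : Cplx :=
  mkC (re x * re y - im x * im y) (re x * im y + im x * re y).
Definition Cconj (x : Cplx) : Cplx := mkC (re x) (- im x).
Definition Cnorm2 (x : Cplx) : R := re x * re x + im x * im x.
Definition Cabs (x : Cplx) : R := sqrt (Cnorm2 x).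
Definition Cexpi (x : R) : Cplx := mkC (cos x) (sin x).

Fixpoint Csum (n : nat) (F : nat -> Cplx) : Cplx :=
  match n with O => C0 | S m => Cadd (Csum m F) (F m) end.
Fixpoint Rsum (n : nat) (F : nat -> R) : R :=
  match n with O => 0 | S m => Rsum m F + F m end.
Fixpoint countP (n : nat) (P : nat -> Prop) : nat :=
  match n with
  | O => O
  | S m => (countP m P + if excluded_middle_informative (P m) then 1 else 0)%nat
  end.

(** * Graphs
   A graph with [n] vertices 0..n-1 and [B] (undirected) bonds 0..B-1;
   bond e joins vertices [e1 e] and [e2 e].  Directed bonds are 0..2B-1:
   for e < B, directed bond e goes e1 e -> e2 e and directed bond e+B goes
   e2 e -> e1 e. *)
Section Graph.
Variables (B : nat) (e1 e2 : nat -> nat).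

Definition ub (b : nat) : nat := if (b <? B)%nat then b else (b - B)%nat.
Definition ob (b : nat) : nat := if (b <? B)%nat then e1 b else e2 (b - B)%nat.
Definition tb (b : nat) : nat := if (b <? B)%nat then e2 b else e1 (b - B)%nat.
Definition revb (b : nat) : nat := if (b <? B)%nat then (b + B)%nat else (b - B)%nat.

Definition incidentb (v e : nat) : bool := Nat.eqb (e1 e) v || Nat.eqb (e2 e) v.

Definition simple_graph (n : nat) : Prop :=
  (forall e, (e < B)%nat -> (e1 e < n)%nat /\ (e2 e < n)%nat /\ e1 e <> e2 e) /\
  (forall e e', (e < B)%nat -> (e' < B)%nat ->
     ((e1 e = e1 e' /\ e2 e = e2 e') \/ (e1 e = e2 e' /\ e2 e = e1 e')) -> e = e').

Definition degree (v : nat) : nat := length (filter (incidentb v) (seq 0 B)).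

Definition regular (n d : nat) : Prop := forall v, (v < n)%nat -> degree v = d.

(** [sigma v] is the vertex scattering matrix at v, indexed (row, column) by
    the bonds incident to v. *)
Definition vertex_unitary (n : nat) (sigma : nat -> nat -> nat -> Cplx) : Prop :=
  forall v e e', (v < n)%nat -> (e < B)%nat -> (e' < B)%nat ->
    incidentb v e = true -> incidentb v e' = true ->
    Csum B (fun x => if incidentb v x then Cmul (Cconj (sigma v x e)) (sigma v x e') else C0)
      = (if Nat.eqb e e' then C1 else C0) /\
    Csum B (fun x => if incidentb v x then Cmul (sigma v e x) (Cconj (sigma v e' x)) else C0)
      = (if Nat.eqb e e' then C1 else C0).

Definition no_backscattering (n : nat) (sigma : nat -> nat -> nat -> Cplx) : Prop :=
  forall v e, (v < n)%nat -> (e < B)%nat -> incidentb v e = true -> sigma v e e = C0.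

Definition Smat (sigma : nat -> nat -> nat -> Cplx) (b c : nat) : Cplx :=
  if Nat.eqb (tb b) (ob c) then sigma (tb b) (ub c) (ub b) else C0.

Definition Umat (L : nat -> R) (sigma : nat -> nat -> nat -> Cplx) (k : R) (b c : nat) : Cplx :=
  Cmul (Cexpi (k * L (ub b))) (Smat sigma b c).

Definition Mmat (sigma : nat -> nat -> nat -> Cplx) (b c : nat) : R := Cnorm2 (Smat sigma b c).

Fixpoint Mpow (sigma : nat -> nat -> nat -> Cplx) (t : nat) (b c : nat) : R :=
  match t with
  | O => if Nat.eqb b c then 1 else 0
  | S t' => Rsum (2 * B) (fun a => Mmat sigma b a * Mpow sigma t' a c)
  end.

Definition cinner (x y : nat -> Cplx) : Cplx :=
  Csum (2 * B) (fun b => Cmul (Cconj (x b)) (y b)).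

Definition f_Mt_f (sigma : nat -> nat -> nat -> Cplx) (t : nat) (f : nat -> Cplx) : Cplx :=
  cinner f (fun b => Csum (2 * B) (fun c => Cmul (CR (Mpow sigma t b c)) (f c))).

Definition is_onb_eigenbasis (U : nat -> nat -> Cplx) (phi : nat -> nat -> Cplx) : Prop :=
  (forall j j', (j < 2 * B)%nat -> (j' < 2 * B)%nat ->
     cinner (phi j) (phi j') = (if Nat.eqb j j' then C1 else C0)) /\
  (forall j, (j < 2 * B)%nat -> exists lam : Cplx,
     forall b, (b < 2 * B)%nat ->
       Csum (2 * B) (fun c => Cmul (U b c) (phi j c)) = Cmul lam (phi j b)).

Definition Op (f : nat -> Cplx) (x : nat -> Cplx) : nat -> Cplx := fun b => Cmul (f b) (x b).
Definition TrOp (f : nat -> Cplx) : Cplx := Csum (2 * B) f.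

Definition V_integrand (f : nat -> Cplx) (phi : R -> nat -> nat -> Cplx) (k : R) : R :=
  Rsum (2 * B) (fun j =>
    Cnorm2 (Csub (cinner (phi k j) (Op f (phi k j)))
                 (Cmul (CR (1 / (2 * INR B))) (TrOp f)))).

Definition is_cycle (p : list nat) : Prop :=
  (0 < length p)%nat /\
  (forall i, In i p -> (i < 2 * B)%nat) /\
  (forall i, (i < length p)%nat ->
     tb (nth i p O) = ob (nth ((i + 1) mod length p) p O) /\
     nth ((i + 1) mod length p) p O <> revb (nth i p O)).

Definition on_short_cycle (t : nat) (e : nat) : Prop :=
  exists p b, is_cycle p /\ (length p <= t)%nat /\ In b p /\ ub b = e.

Definition card_CBt (t : nat) : nat := countP B (on_short_cycle t).

End Graph.

Definition w_hat (T : nat) (t : R) : R :=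
  if Rlt_dec (Rabs t) (INR T) then (1 / INR T) * (1 - Rabs t / INR T) else 0.

Definition time_avg_limit (g : R -> R) (l : R) : Prop :=
  (forall K, 0 < K -> inhabited (Riemann_integrable g 0 K)) /\
  (forall eps, 0 < eps -> exists K0, forall K (pr : Riemann_integrable g 0 K),
      K0 < K -> 0 < K -> Rabs (RiemannInt pr / K - l) < eps).

From Pilot Require Import Defs.
From Stdlib Require Import Reals Lra Lia List ClassicalEpsilon.
Import ListNotations.
Open Scope R_scope.

(* The bound holds for every fixed k, and averaging over k preserves it.
   Fix k, let U = U(k) with eigenbasis phi_j; its eigenvalues are unimodular, so
   the diagonal elements <phi_j, Op(f) phi_j> do not change when Op(f) is
   replaced by its time average G = (1/T) sum_{s<T} U^{-s} Op(f) U^s.  As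
   Tr Op(f) = 0, Bessel's inequality bounds the variance by ||G||_HS^2, and
   expanding this norm gives a Fejer sum over lags t < T of
   h(t) = sum_{a,a'} |(U^t)_{aa'}|^2 conj(f_a) f_a'.
   Without back-scattering, (U^t)_{aa'} is a sum over non-backtracking walks,
   and two such walks of equal length with the same ends close up into a cycle
   of length at most 2t.  Hence |(U^t)_{aa'}|^2 = (M^t)_{aa'} unless a comes
   within t steps of a bond on a short cycle; there are at most
   4 (d-1)^t |C_{B,2T}| such a, and each contributes at most 2 kappa^2 since
   the rows of |U^t|^2 and of M^t are probability vectors. *)

(* [C1] of the Reals library shadows the complex unit. *)
Notation Cone := Defs.C1.

Lemma Cplx_eq (x y : Cplx) : re x = re y -> im x = im y -> x = y.
Proof. destruct x, y; simpl; intros -> ->; reflexivity. Qed.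

Definition Copp (x : Cplx) : Cplx := mkC (- re x) (- im x).

Lemma Cplx_ring_theory : ring_theory C0 Cone Cadd Cmul Csub Copp (@eq Cplx).
Proof.
  constructor; intros; apply Cplx_eq; destruct x; try destruct y; try destruct z;
    simpl; ring.
Qed.
Add Ring Cplx_ring : Cplx_ring_theory.

Ltac Csimpl := apply Cplx_eq; simpl; ring.

Lemma Cconj_mul x y : Cconj (Cmul x y) = Cmul (Cconj x) (Cconj y).
Proof. Csimpl. Qed.
Lemma Cconj_add x y : Cconj (Cadd x y) = Cadd (Cconj x) (Cconj y).
Proof. Csimpl. Qed.
Lemma Cconj_sub x y : Cconj (Csub x y) = Csub (Cconj x) (Cconj y).
Proof. Csimpl. Qed.
Lemma Cconj_involutive x : Cconj (Cconj x) = x.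
Proof. Csimpl. Qed.
Lemma Cconj_C0 : Cconj C0 = C0.
Proof. Csimpl. Qed.
Lemma Cconj_Cone : Cconj Cone = Cone.
Proof. Csimpl. Qed.
Lemma Cconj_CR r : Cconj (CR r) = CR r.
Proof. Csimpl. Qed.
Lemma Cmul_conj_r x : Cmul x (Cconj x) = CR (Cnorm2 x).
Proof. unfold Cnorm2; Csimpl. Qed.
Lemma Cmul_conj_l x : Cmul (Cconj x) x = CR (Cnorm2 x).
Proof. unfold Cnorm2; Csimpl. Qed.
Lemma CR_mul a b : CR (a * b) = Cmul (CR a) (CR b).
Proof. Csimpl. Qed.
Lemma CR_add a b : CR (a + b) = Cadd (CR a) (CR b).
Proof. Csimpl. Qed.
Lemma CR_0 : CR 0 = C0.
Proof. Csimpl. Qed.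
Lemma CR_1 : CR 1 = Cone.
Proof. Csimpl. Qed.

Lemma Cnorm2_mul x y : Cnorm2 (Cmul x y) = Cnorm2 x * Cnorm2 y.
Proof. unfold Cnorm2; simpl; ring. Qed.
Lemma Cnorm2_conj x : Cnorm2 (Cconj x) = Cnorm2 x.
Proof. unfold Cnorm2; simpl; ring. Qed.
Lemma Cnorm2_nonneg x : 0 <= Cnorm2 x.
Proof. unfold Cnorm2; nra. Qed.
Lemma Cnorm2_C0 : Cnorm2 C0 = 0.
Proof. unfold Cnorm2; simpl; ring. Qed.
Lemma Cnorm2_Cone : Cnorm2 Cone = 1.
Proof. unfold Cnorm2; simpl; ring. Qed.
Lemma Cnorm2_Cexpi t : Cnorm2 (Cexpi t) = 1.
Proof. unfold Cnorm2, Cexpi; simpl. rewrite <- (sin2_cos2 t). unfold Rsqr; ring. Qed.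
Lemma Cmul_Cexpi_conj t : Cmul (Cexpi t) (Cconj (Cexpi t)) = Cone.
Proof. rewrite Cmul_conj_r, Cnorm2_Cexpi; apply CR_1. Qed.

Lemma Cmul_neq0 x y : Cmul x y <> C0 -> x <> C0 /\ y <> C0.
Proof. intros H; split; intros ->; apply H; Csimpl. Qed.

Lemma re_Cmul_conj_le x y K : Cabs x <= K -> Cabs y <= K ->
  Rabs (re (Cmul (Cconj x) y)) <= K * K.
Proof.
  destruct x as [a b], y as [c e]; unfold Cabs, Cnorm2; simpl; intros Hx Hy.
  assert (Hxy : sqrt (a * a + b * b) * sqrt (c * c + e * e) <= K * K).
  { apply Rmult_le_compat; auto using sqrt_pos. }
  rewrite <- sqrt_mult in Hxy by (apply Rplus_le_le_0_compat; apply Rle_0_sqr).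
  eapply Rle_trans; [|exact Hxy].
  rewrite <- sqrt_Rsqr_abs. apply sqrt_le_1_alt. unfold Rsqr.
  pose proof (Rle_0_sqr (a * e - b * c)) as Hlagrange; unfold Rsqr in Hlagrange.
  replace ((a * a + b * b) * (c * c + e * e))
    with ((a * c - - b * e) * (a * c - - b * e) + (a * e - b * c) * (a * e - b * c))
    by ring.
  lra.
Qed.

Lemma Csum_ext n F G : (forall i, (i < n)%nat -> F i = G i) -> Csum n F = Csum n G.
Proof. induction n; intros H; simpl; auto. rewrite IHn, H by auto; auto. Qed.
Lemma Rsum_ext n F G : (forall i, (i < n)%nat -> F i = G i) -> Rsum n F = Rsum n G.
Proof. induction n; intros H; simpl; auto. rewrite IHn, H by auto; auto. Qed.

Lemma Csum_add n F G : Csum n (fun i => Cadd (F i) (G i)) = Cadd (Csum n F) (Csum n G).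
Proof. induction n; simpl. Csimpl. rewrite IHn; ring. Qed.
Lemma Rsum_add n F G : Rsum n (fun i => F i + G i) = Rsum n F + Rsum n G.
Proof. induction n; simpl. ring. rewrite IHn; ring. Qed.

Lemma Csum_mul_l n z F : Cmul z (Csum n F) = Csum n (fun i => Cmul z (F i)).
Proof. induction n; simpl. Csimpl. rewrite <- IHn; ring. Qed.
Lemma Csum_mul_r n z F : Cmul (Csum n F) z = Csum n (fun i => Cmul (F i) z).
Proof. induction n; simpl. Csimpl. rewrite <- IHn; ring. Qed.
Lemma Rsum_mul_l n z F : z * Rsum n F = Rsum n (fun i => z * F i).
Proof. induction n; simpl. ring. rewrite <- IHn; ring. Qed.
Lemma Csum_prod n m F G :
  Csum n (fun b => Csum m (fun c => Cmul (F b) (G c))) = Cmul (Csum n F) (Csum m G).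
Proof. rewrite Csum_mul_r. apply Csum_ext; intros. symmetry; apply Csum_mul_l. Qed.

Lemma Csum_swap n m F :
  Csum n (fun i => Csum m (F i)) = Csum m (fun j => Csum n (fun i => F i j)).
Proof.
  induction n; simpl.
  - induction m; simpl; auto. rewrite <- IHm. Csimpl.
  - rewrite IHn, Csum_add. reflexivity.
Qed.
Lemma Rsum_swap n m F :
  Rsum n (fun i => Rsum m (F i)) = Rsum m (fun j => Rsum n (fun i => F i j)).
Proof.
  induction n; simpl.
  - induction m; simpl; auto. rewrite <- IHm. ring.
  - rewrite IHn, Rsum_add. reflexivity.
Qed.
Lemma Csum_swap3 n m p F :
  Csum n (fun i => Csum m (fun j => Csum p (fun k => F i j k)))
  = Csum m (fun j => Csum p (fun k => Csum n (fun i => F i j k))).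
Proof. rewrite Csum_swap. apply Csum_ext; intros. apply Csum_swap. Qed.

Lemma Csum_eq0 n F : (forall i, (i < n)%nat -> F i = C0) -> Csum n F = C0.
Proof. induction n; intros H; simpl; auto. rewrite IHn, H by auto. Csimpl. Qed.
Lemma Rsum_eq0 n F : (forall i, (i < n)%nat -> F i = 0) -> Rsum n F = 0.
Proof. induction n; intros H; simpl; auto. rewrite IHn, H by auto. ring. Qed.

Lemma Csum_neq0 n F : Csum n F <> C0 -> exists i, (i < n)%nat /\ F i <> C0.
Proof.
  intros H. apply NNPP; intros Hno. apply H, Csum_eq0. intros i Hi.
  apply NNPP; intros HF. apply Hno; eauto.
Qed.

Lemma Csum_single n F j : (j < n)%nat ->
  (forall i, (i < n)%nat -> i <> j -> F i = C0) -> Csum n F = F j.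
Proof.
  induction n; intros Hj H; [lia|]. simpl.
  destruct (Nat.eq_dec j n) as [->|Hne].
  - rewrite Csum_eq0 by (intros; apply H; lia). Csimpl.
  - rewrite IHn, (H n) by (auto; lia). Csimpl.
Qed.
Lemma Rsum_single n F j : (j < n)%nat ->
  (forall i, (i < n)%nat -> i <> j -> F i = 0) -> Rsum n F = F j.
Proof.
  induction n; intros Hj H; [lia|]. simpl.
  destruct (Nat.eq_dec j n) as [->|Hne].
  - rewrite Rsum_eq0 by (intros; apply H; lia). ring.
  - rewrite IHn, (H n) by (auto; lia). ring.
Qed.

Lemma Cconj_sum n F : Cconj (Csum n F) = Csum n (fun i => Cconj (F i)).
Proof. induction n; simpl. apply Cconj_C0. rewrite Cconj_add, IHn; auto. Qed.
Lemma re_sum n F : re (Csum n F) = Rsum n (fun i => re (F i)).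
Proof. induction n; simpl; auto. rewrite IHn; auto. Qed.
Lemma CR_sum n F : CR (Rsum n F) = Csum n (fun i => CR (F i)).
Proof. induction n; simpl. apply CR_0. rewrite CR_add, IHn; auto. Qed.

Lemma Csum_split m k F :
  Csum (m + k) F = Cadd (Csum m F) (Csum k (fun i => F (m + i)%nat)).
Proof.
  induction k; simpl. rewrite Nat.add_0_r. Csimpl.
  rewrite Nat.add_succ_r; simpl. rewrite IHk. ring.
Qed.

Lemma Rsum_le n F G : (forall i, (i < n)%nat -> F i <= G i) -> Rsum n F <= Rsum n G.
Proof. induction n; intros H; simpl. lra. apply Rplus_le_compat; auto. Qed.
Lemma Rsum_nonneg n F : (forall i, (i < n)%nat -> 0 <= F i) -> 0 <= Rsum n F.
Proof. intros H. rewrite <- (Rsum_eq0 n (fun _ => 0)) by auto. apply Rsum_le; auto. Qed.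
Lemma Csum_const n z : Csum n (fun _ => z) = Cmul (CR (INR n)) z.
Proof. induction n; simpl Csum. Csimpl. rewrite IHn, S_INR. Csimpl. Qed.
Lemma Rsum_shift n F : Rsum (S n) F = F O + Rsum n (fun i => F (S i)).
Proof. induction n; simpl in *. ring. rewrite IHn. ring. Qed.
Lemma Rsum_rev n F : Rsum n (fun i => F (n - 1 - i)%nat) = Rsum n F.
Proof.
  induction n; auto.
  rewrite Rsum_shift. simpl (S n - 1 - 0)%nat. rewrite Nat.sub_0_r.
  change (Rsum (S n) F) with (Rsum n F + F n). rewrite <- IHn, Rplus_comm.
  f_equal; [apply Rsum_ext; intros; f_equal|f_equal]; lia.
Qed.

Lemma Cnorm2_Csum_single_support m F :
  (forall x y, (x < m)%nat -> (y < m)%nat -> x <> y -> F x = C0 \/ F y = C0) ->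
  Cnorm2 (Csum m F) = Rsum m (fun i => Cnorm2 (F i)).
Proof.
  induction m; intros H; simpl; [apply Cnorm2_C0|].
  destruct (excluded_middle_informative (F m = C0)) as [E|E].
  - rewrite E, Cnorm2_C0, <- IHm by (intros; apply H; lia).
    replace (Cadd (Csum m F) C0) with (Csum m F) by Csimpl. ring.
  - rewrite Csum_eq0, Rsum_eq0.
    + replace (Cadd C0 (F m)) with (F m) by Csimpl. ring.
    + intros i Hi. destruct (H i m) as [->|]; try lia; [apply Cnorm2_C0|contradiction].
    + intros i Hi. destruct (H i m) as [->|]; try lia; [reflexivity|contradiction].
Qed.

Lemma countP_S n P :
  countP (S n) P = (countP n P + if excluded_middle_informative (P n) then 1 else 0)%nat.
Proof. reflexivity. Qed.

Ltac decide_P P := destruct (excluded_middle_informative P).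

Lemma countP_ext n P Q : (forall i, (i < n)%nat -> (P i <-> Q i)) -> countP n P = countP n Q.
Proof.
  induction n; intros H; auto. rewrite !countP_S, IHn by (intros; apply H; lia).
  specialize (H n (Nat.lt_succ_diag_r n)). decide_P (P n); decide_P (Q n); tauto.
Qed.
Lemma countP_le n P Q : (forall i, (i < n)%nat -> P i -> Q i) -> (countP n P <= countP n Q)%nat.
Proof.
  induction n; intros H; auto. rewrite !countP_S.
  specialize (IHn (fun i Hi => H i ltac:(lia))). specialize (H n ltac:(lia)).
  decide_P (P n); decide_P (Q n); try lia. tauto.
Qed.
Lemma countP_or n P Q : (countP n (fun i => P i \/ Q i) <= countP n P + countP n Q)%nat.
Proof.
  induction n; auto. rewrite !countP_S.
  decide_P (P n \/ Q n); decide_P (P n); decide_P (Q n); try lia. tauto.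
Qed.
Lemma countP_disj n P Q : (forall i, (i < n)%nat -> ~ (P i /\ Q i)) ->
  countP n (fun i => P i \/ Q i) = (countP n P + countP n Q)%nat.
Proof.
  induction n; intros H; auto. rewrite !countP_S, IHn by (intros; apply H; lia).
  specialize (H n ltac:(lia)).
  decide_P (P n \/ Q n); decide_P (P n); decide_P (Q n); try lia; tauto.
Qed.
Lemma countP_split m k P :
  countP (m + k) P = (countP m P + countP k (fun i => P (m + i)%nat))%nat.
Proof.
  induction k. rewrite Nat.add_0_r; simpl; lia.
  rewrite Nat.add_succ_r, !countP_S, IHk. lia.
Qed.
Lemma countP_filter n (p : nat -> bool) :
  length (filter p (seq 0 n)) = countP n (fun i => p i = true).
Proof.
  induction n; auto. rewrite seq_S, filter_app, length_app, IHn, countP_S. simpl.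
  destruct (p n); decide_P (true = true); decide_P (false = true); simpl; congruence || lia.
Qed.
Lemma countP_false n P : (forall i, (i < n)%nat -> ~ P i) -> countP n P = O.
Proof.
  induction n; intros H; auto. rewrite countP_S, IHn by (intros; apply H; lia).
  decide_P (P n); auto. exfalso; apply (H n); auto.
Qed.
Lemma countP_remove n P z : (z < n)%nat -> P z ->
  (countP n (fun i => P i /\ i <> z) + 1)%nat = countP n P.
Proof.
  induction n; intros Hz Pz; [lia|]. rewrite !countP_S.
  destruct (Nat.eq_dec z n) as [<-|Hne].
  - rewrite (countP_ext z _ P) by (intros; split; [tauto|split; auto; lia]).
    decide_P (P z /\ z <> z); decide_P (P z); tauto || lia.
  - rewrite <- IHn by (auto; lia). assert (n <> z) by lia.
    decide_P (P n /\ n <> z); decide_P (P n); try lia; tauto.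
Qed.
Lemma countP_eq_le_1 n e : (countP n (fun a => a = e) <= 1)%nat.
Proof.
  induction n; simpl; auto. decide_P (n = e); [|lia].
  rewrite countP_false by (intros; lia). lia.
Qed.

Lemma countP_exists_le n m (Q : nat -> Prop) (Rr : nat -> nat -> Prop) K :
  (forall x, (x < m)%nat -> Q x -> (countP n (fun a => Rr a x) <= K)%nat) ->
  (countP n (fun a => exists x, (x < m)%nat /\ Q x /\ Rr a x) <= countP m Q * K)%nat.
Proof.
  induction m; intros H.
  - rewrite countP_false; [lia|]. intros a _ [x [Hx _]]; lia.
  - rewrite (countP_ext n _ (fun a => (exists x, (x < m)%nat /\ Q x /\ Rr a x) \/ (Q m /\ Rr a m))).
    + eapply Nat.le_trans; [apply countP_or|]. rewrite countP_S.
      specialize (IHm (fun x Hx Hq => H x ltac:(lia) Hq)).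
      destruct (excluded_middle_informative (Q m)) as [Hq|Hq].
      * specialize (H m ltac:(lia) Hq).
        pose proof (countP_le n (fun a => Q m /\ Rr a m) (fun a => Rr a m) (fun _ _ HQR => proj2 HQR)). nia.
      * rewrite (countP_false n (fun a => Q m /\ Rr a m)) by tauto. lia.
    + intros a _; split.
      * intros [x [Hx HQR]]. destruct (Nat.eq_dec x m) as [->|]; [right; auto|].
        left; exists x; split; [lia|auto].
      * intros [[x [Hx HQR]]|HQR]; [exists x; split; [lia|auto]|exists m; auto].
Qed.

Lemma INR_countP_exists_le n m (Rr : nat -> nat -> Prop) :
  INR (countP n (fun a => exists s, (s < m)%nat /\ Rr a s))
  <= Rsum m (fun s => INR (countP n (fun a => Rr a s))).
Proof.
  induction m.
  - rewrite countP_false; [simpl; lra|]. intros a _ [s [Hs _]]; lia.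
  - rewrite (countP_ext n _ (fun a => (exists s, (s < m)%nat /\ Rr a s) \/ Rr a m)).
    + simpl Rsum. eapply Rle_trans; [apply le_INR, countP_or|]. rewrite plus_INR. lra.
    + intros a _; split.
      * intros [s [Hs HR]]. destruct (Nat.eq_dec s m) as [->|]; [right; auto|].
        left; exists s; split; [lia|auto].
      * intros [[s [Hs HR]]|HR]; [exists s; split; [lia|auto]|exists m; auto].
Qed.

Lemma Rsum_le_countP n F (P : nat -> Prop) K : 0 <= K ->
  (forall a, (a < n)%nat -> ~ P a -> F a <= 0) -> (forall a, (a < n)%nat -> P a -> F a <= K) ->
  Rsum n F <= K * INR (countP n P).
Proof.
  induction n; intros HK Hout Hin; simpl; [lra|]. rewrite plus_INR.
  specialize (IHn HK (fun a Ha => Hout a ltac:(lia)) (fun a Ha => Hin a ltac:(lia))).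
  destruct (excluded_middle_informative (P n)) as [Hp|Hp].
  - specialize (Hin n ltac:(lia) Hp). simpl. lra.
  - specialize (Hout n ltac:(lia) Hp). simpl. lra.
Qed.

Lemma sum_pow_le r t : 2 <= r -> Rsum t (fun s => r ^ (S s)) <= 2 * r ^ t.
Proof.
  intros Hr; induction t; simpl Rsum; [simpl; lra|].
  assert (0 <= r ^ t) by (apply pow_le; lra). simpl in *. nra.
Qed.

Definition inprod (N : nat) (x y : nat -> Cplx) : Cplx :=
  Csum N (fun b => Cmul (Cconj (x b)) (y b)).

Definition mapply (N : nat) (Mx : nat -> nat -> Cplx) (x : nat -> Cplx) : nat -> Cplx :=
  fun b => Csum N (fun c => Cmul (Mx b c) (x c)).

Definition kron (j j' : nat) : Cplx := if Nat.eqb j j' then Cone else C0.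

Definition orthonormal (N m : nat) (ph : nat -> nat -> Cplx) : Prop :=
  forall j j', (j < m)%nat -> (j' < m)%nat -> inprod N (ph j) (ph j') = kron j j'.

Lemma Csum_kron_l m j a : (j < m)%nat -> Csum m (fun j' => Cmul (a j') (kron j j')) = a j.
Proof.
  intros Hj. rewrite (Csum_single _ _ j Hj).
  2: intros i _ Hi; unfold kron; destruct (Nat.eqb_spec j i); [lia|ring].
  unfold kron; rewrite Nat.eqb_refl; ring.
Qed.
Lemma Csum_kron_r m j a : (j < m)%nat -> Csum m (fun j' => Cmul (kron j j') (a j')) = a j.
Proof.
  intros Hj. rewrite <- (Csum_kron_l m j a Hj). apply Csum_ext; intros; ring.
Qed.
Lemma kron_comm j j' : kron j j' = kron j' j.
Proof. unfold kron; rewrite Nat.eqb_sym; reflexivity. Qed.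

Lemma inprod_ext N x y x' y' : (forall b, (b < N)%nat -> x b = x' b) ->
  (forall b, (b < N)%nat -> y b = y' b) -> inprod N x y = inprod N x' y'.
Proof. intros Hx Hy; apply Csum_ext; intros; rewrite Hx, Hy; auto. Qed.
Lemma inprod_conj N x y : inprod N y x = Cconj (inprod N x y).
Proof.
  unfold inprod; rewrite Cconj_sum; apply Csum_ext; intros.
  rewrite Cconj_mul, Cconj_involutive; ring.
Qed.
Lemma inprod_sub_r N x y z :
  inprod N x (fun b => Csub (y b) (z b)) = Csub (inprod N x y) (inprod N x z).
Proof.
  unfold inprod. replace (Csub _ _) with
    (Cadd (Csum N (fun b => Cmul (Cconj (x b)) (y b)))
          (Cmul (CR (-1)) (Csum N (fun b => Cmul (Cconj (x b)) (z b))))) by Csimpl.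
  rewrite Csum_mul_l, <- Csum_add. apply Csum_ext; intros. Csimpl.
Qed.
Lemma inprod_sum_r N m x a (ph : nat -> nat -> Cplx) :
  inprod N x (fun b => Csum m (fun j => Cmul (a j) (ph j b)))
  = Csum m (fun j => Cmul (a j) (inprod N x (ph j))).
Proof.
  unfold inprod. rewrite (Csum_ext N _ (fun b => Csum m (fun j =>
    Cmul (Cconj (x b)) (Cmul (a j) (ph j b))))) by (intros; apply Csum_mul_l).
  rewrite Csum_swap. apply Csum_ext; intros.
  rewrite Csum_mul_l. apply Csum_ext; intros. ring.
Qed.
Lemma inprod_self N x : inprod N x x = CR (Rsum N (fun b => Cnorm2 (x b))).
Proof. unfold inprod. rewrite CR_sum. apply Csum_ext; intros. apply Cmul_conj_l. Qed.

Lemma sum_Cnorm2_nonneg N x : 0 <= Rsum N (fun b => Cnorm2 (x b)).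
Proof. apply Rsum_nonneg; intros; apply Cnorm2_nonneg. Qed.

Lemma bessel N m ph g : orthonormal N m ph ->
  Rsum m (fun j => Cnorm2 (inprod N (ph j) g)) <= Rsum N (fun b => Cnorm2 (g b)).
Proof.
  intros Hon.
  set (al := fun j => inprod N (ph j) g).
  set (r := fun b => Csub (g b) (Csum m (fun j => Cmul (al j) (ph j b)))).
  assert (Hr_ph : forall j, (j < m)%nat -> inprod N (ph j) r = C0).
  { intros j Hj. unfold r. rewrite inprod_sub_r, inprod_sum_r.
    rewrite (Csum_ext _ _ (fun j' => Cmul (al j') (kron j j'))) by (intros; rewrite Hon; auto).
    rewrite Csum_kron_l by auto. unfold al. Csimpl. }
  assert (Hr_g : inprod N r g = Csub (inprod N g g) (Csum m (fun j => Cmul (Cconj (al j)) (al j)))).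
  { rewrite inprod_conj. unfold r. rewrite inprod_sub_r, inprod_sum_r, Cconj_sub, Cconj_sum.
    rewrite <- inprod_conj. f_equal. apply Csum_ext; intros.
    rewrite Cconj_mul, <- inprod_conj. reflexivity. }
  assert (Hrr : inprod N r r = Csub (inprod N g g) (CR (Rsum m (fun j => Cnorm2 (al j))))).
  { change (inprod N r r) with
      (inprod N r (fun b => Csub (g b) (Csum m (fun j => Cmul (al j) (ph j b))))).
    rewrite inprod_sub_r, inprod_sum_r, Hr_g.
    rewrite (Csum_eq0 m (fun j => Cmul (al j) (inprod N r (ph j)))) by
      (intros j Hj; rewrite inprod_conj, Hr_ph, Cconj_C0 by auto; ring).
    rewrite CR_sum, (Csum_ext m _ (fun j => CR (Cnorm2 (al j)))) by (intros; apply Cmul_conj_l).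
    Csimpl. }
  rewrite !inprod_self in Hrr. apply (f_equal re) in Hrr. simpl in Hrr.
  pose proof (sum_Cnorm2_nonneg N r). unfold al in Hrr. lra.
Qed.

Lemma cauchy_schwarz N x y : re (inprod N x x) = 1 ->
  Cnorm2 (inprod N x y) <= Rsum N (fun b => Cnorm2 (y b)).
Proof.
  intros Hx. pose proof (bessel N 1 (fun _ => x) y) as H. simpl in H.
  rewrite Rplus_0_l in H. apply H.
  intros j j' Hj Hj'. replace j with O by lia; replace j' with O by lia.
  rewrite inprod_self in *. simpl in Hx. rewrite Hx. apply CR_1.
Qed.

Lemma diag_entries_le_hs_norm N m ph Mx : orthonormal N m ph ->
  Rsum m (fun j => Cnorm2 (inprod N (ph j) (mapply N Mx (ph j))))
  <= Rsum N (fun b => Rsum N (fun c => Cnorm2 (Mx b c))).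
Proof.
  intros Hon.
  apply Rle_trans with
    (Rsum m (fun j => Rsum N (fun b => Cnorm2 (inprod N (ph j) (fun c => Cconj (Mx b c)))))).
  - apply Rsum_le; intros j Hj. eapply Rle_trans.
    + apply cauchy_schwarz. rewrite Hon by auto. unfold kron; rewrite Nat.eqb_refl; reflexivity.
    + right. apply Rsum_ext; intros b Hb. rewrite <- Cnorm2_conj. f_equal.
      unfold inprod, mapply. rewrite Cconj_sum. apply Csum_ext; intros. rewrite Cconj_mul. ring.
  - rewrite Rsum_swap. apply Rsum_le; intros b Hb.
    eapply Rle_trans; [apply bessel; auto|].
    right. apply Rsum_ext; intros; apply Cnorm2_conj.
Qed.

Fixpoint Cpow (z : Cplx) (n : nat) : Cplx :=
  match n with O => Cone | S m => Cmul z (Cpow z m) end.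

Lemma Cnorm2_Cpow z n : Cnorm2 z = 1 -> Cnorm2 (Cpow z n) = 1.
Proof.
  intros Hz; induction n; simpl. apply Cnorm2_Cone.
  rewrite Cnorm2_mul, Hz, IHn; ring.
Qed.

Definition row_unitary (N : nat) (u : nat -> nat -> Cplx) : Prop :=
  forall b b', (b < N)%nat -> (b' < N)%nat ->
    Csum N (fun c => Cmul (u b c) (Cconj (u b' c))) = kron b b'.
Definition col_unitary (N : nat) (u : nat -> nat -> Cplx) : Prop :=
  forall c c', (c < N)%nat -> (c' < N)%nat ->
    Csum N (fun b => Cmul (Cconj (u b c)) (u b c')) = kron c c'.

Definition is_eigenvector (N : nat) (u : nat -> nat -> Cplx) (lam : Cplx) (ph : nat -> Cplx) :=
  forall b, (b < N)%nat -> mapply N u ph b = Cmul lam (ph b).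

Section MatrixPowers.
Variables (N : nat) (u : nat -> nat -> Cplx).

Fixpoint mpow (t : nat) (a c : nat) : Cplx :=
  match t with
  | O => kron a c
  | S t' => Csum N (fun x => Cmul (u a x) (mpow t' x c))
  end.

Lemma mpow_1 a c : (c < N)%nat -> mpow 1 a c = u a c.
Proof.
  intros Hc; simpl. rewrite <- (Csum_kron_l N c (u a)) by auto.
  apply Csum_ext; intros; rewrite kron_comm; reflexivity.
Qed.

Lemma mpow_S_r t a c : (a < N)%nat -> (c < N)%nat ->
  mpow (S t) a c = Csum N (fun x => Cmul (mpow t a x) (u x c)).
Proof.
  revert a c; induction t; intros a c Ha Hc.
  - rewrite mpow_1 by auto. simpl. rewrite Csum_kron_r by auto. reflexivity.
  - change (mpow (S (S t)) a c) with (Csum N (fun x => Cmul (u a x) (mpow (S t) x c))).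
    rewrite (Csum_ext _ _ (fun x => Csum N (fun y => Cmul (u a x) (Cmul (mpow t x y) (u y c)))))
      by (intros x Hx; rewrite IHt by auto; apply Csum_mul_l).
    rewrite Csum_swap. apply Csum_ext; intros y Hy. simpl.
    rewrite Csum_mul_r. apply Csum_ext; intros; ring.
Qed.

Lemma mpow_eigenvector lam ph t b : (b < N)%nat -> is_eigenvector N u lam ph ->
  mapply N (mpow t) ph b = Cmul (Cpow lam t) (ph b).
Proof.
  unfold is_eigenvector, mapply in *.
  intros Hb Heig; revert b Hb; induction t; intros b Hb; simpl.
  - rewrite Csum_kron_r by auto. ring.
  - rewrite (Csum_ext _ _ (fun c => Csum N (fun x => Cmul (u b x) (Cmul (mpow t x c) (ph c)))))
      by (intros; rewrite Csum_mul_r; apply Csum_ext; intros; ring).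
    rewrite Csum_swap.
    rewrite (Csum_ext _ _ (fun x => Cmul (Cpow lam t) (Cmul (u b x) (ph x))))
      by (intros x Hx; rewrite <- Csum_mul_l, IHt by auto; ring).
    rewrite <- Csum_mul_l, Heig by auto. ring.
Qed.

Lemma eigenvalue_unimodular lam ph : col_unitary N u ->
  re (inprod N ph ph) = 1 -> is_eigenvector N u lam ph -> Cnorm2 lam = 1.
Proof.
  intros Hcol Hn Heig.
  assert (Hiso : inprod N (mapply N u ph) (mapply N u ph) = inprod N ph ph).
  { unfold inprod, mapply. rewrite (Csum_ext _ _ (fun b => Csum N (fun c => Csum N (fun c' =>
        Cmul (Cmul (Cconj (ph c)) (ph c')) (Cmul (Cconj (u b c)) (u b c')))))).
    - rewrite Csum_swap. apply Csum_ext; intros c Hc. rewrite Csum_swap.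
      rewrite (Csum_ext _ _ (fun c' => Cmul (Cmul (Cconj (ph c)) (ph c')) (kron c c')))
        by (intros; rewrite <- Csum_mul_l, Hcol; auto).
      rewrite Csum_kron_l by auto. reflexivity.
    - intros b Hb. rewrite Cconj_sum, Csum_mul_r. apply Csum_ext; intros c Hc.
      rewrite Csum_mul_l. apply Csum_ext; intros. rewrite Cconj_mul. ring. }
  rewrite (inprod_ext N _ _ (fun b => Cmul lam (ph b)) (fun b => Cmul lam (ph b))) in Hiso
    by auto.
  unfold inprod in Hiso.
  rewrite (Csum_ext N _ (fun b => Cmul (CR (Cnorm2 lam)) (Cmul (Cconj (ph b)) (ph b)))) in Hiso
    by (intros; rewrite Cconj_mul, <- (Cmul_conj_l lam); ring).
  rewrite <- Csum_mul_l in Hiso. fold (inprod N ph ph) in Hiso.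
  rewrite inprod_self in Hiso, Hn. simpl in Hn. rewrite Hn in Hiso.
  apply (f_equal re) in Hiso. simpl in Hiso. lra.
Qed.

Hypothesis Hrow : row_unitary N u.

Definition gram (s s' a a' : nat) : Cplx :=
  Csum N (fun c => Cmul (mpow s a c) (Cconj (mpow s' a' c))).

Lemma gram_S s s' a a' : (a < N)%nat -> (a' < N)%nat ->
  gram (S s) (S s') a a' = gram s s' a a'.
Proof.
  intros Ha Ha'. unfold gram.
  rewrite (Csum_ext _ _ (fun c => Csum N (fun x => Csum N (fun y =>
      Cmul (Cmul (mpow s a x) (Cconj (mpow s' a' y))) (Cmul (u x c) (Cconj (u y c))))))).
  - rewrite Csum_swap. apply Csum_ext; intros x Hx. rewrite Csum_swap.
    rewrite (Csum_ext _ _ (fun y => Cmul (Cmul (mpow s a x) (Cconj (mpow s' a' y))) (kron x y)))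
      by (intros; rewrite <- Csum_mul_l, Hrow; auto).
    apply Csum_kron_l; auto.
  - intros c Hc. rewrite !mpow_S_r, Cconj_sum, Csum_mul_r by auto.
    apply Csum_ext; intros x Hx. rewrite Csum_mul_l. apply Csum_ext; intros y Hy.
    rewrite Cconj_mul. ring.
Qed.

Lemma gram_add_l k s a a' : (a < N)%nat -> (a' < N)%nat ->
  gram (k + s) s a a' = mpow k a a'.
Proof.
  intros Ha Ha'; induction s.
  - rewrite Nat.add_0_r. unfold gram; simpl.
    rewrite (Csum_ext _ _ (fun c => Cmul (mpow k a c) (kron a' c))) by
      (intros; unfold kron; destruct (Nat.eqb a' i);
       rewrite ?Cconj_Cone, ?Cconj_C0; reflexivity).
    apply Csum_kron_l; auto.
  - rewrite Nat.add_succ_r, gram_S; auto.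
Qed.

Lemma gram_add_r k s a a' : (a < N)%nat -> (a' < N)%nat ->
  gram s (k + s) a a' = Cconj (mpow k a' a).
Proof.
  intros Ha Ha'; induction s.
  - rewrite Nat.add_0_r. unfold gram; simpl.
    apply Csum_kron_r; auto.
  - rewrite Nat.add_succ_r, gram_S; auto.
Qed.

Lemma mpow_row_norm t a : (a < N)%nat -> Rsum N (fun c => Cnorm2 (mpow t a c)) = 1.
Proof.
  intros Ha. pose proof (gram_add_l 0 t a a Ha Ha) as H. simpl in H.
  unfold kron, gram in H; rewrite Nat.eqb_refl in H.
  rewrite (Csum_ext _ _ (fun c => CR (Cnorm2 (mpow t a c)))) in H by (intros; apply Cmul_conj_r).
  rewrite <- CR_sum in H. apply (f_equal re) in H. exact H.
Qed.

End MatrixPowers.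

(** * Time average of Op(f) along the dynamics *)

Lemma re_CR_mul r z : re (Cmul (CR r) z) = r * re z.
Proof. simpl; ring. Qed.

Lemma inprod_mapply_scale_sum N T z ph (M : nat -> nat -> nat -> Cplx) :
  inprod N ph (mapply N (fun b c => Cmul z (Csum T (fun s => M s b c))) ph)
  = Cmul z (Csum T (fun s => inprod N ph (mapply N (M s) ph))).
Proof.
  unfold inprod, mapply.
  transitivity (Csum N (fun b => Csum N (fun c => Csum T (fun s =>
    Cmul z (Cmul (Cmul (Cconj (ph b)) (M s b c)) (ph c)))))).
  - apply Csum_ext; intros b Hb. rewrite Csum_mul_l. apply Csum_ext; intros c Hc.
    rewrite Csum_mul_l, Csum_mul_r, Csum_mul_l. apply Csum_ext; intros; ring.
  - rewrite Csum_swap3, Csum_swap3, Csum_mul_l. apply Csum_ext; intros s Hs.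
    rewrite Csum_mul_l. apply Csum_ext; intros b Hb.
    rewrite Csum_mul_l, Csum_mul_l. apply Csum_ext; intros; ring.
Qed.

Definition hs_inprod (N : nat) (A B : nat -> nat -> Cplx) : Cplx :=
  Csum N (fun b => Csum N (fun c => Cmul (A b c) (Cconj (B b c)))).

Lemma hs_inprod_self N A :
  re (hs_inprod N A A) = Rsum N (fun b => Rsum N (fun c => Cnorm2 (A b c))).
Proof.
  unfold hs_inprod. rewrite re_sum. apply Rsum_ext; intros.
  rewrite re_sum. apply Rsum_ext; intros. rewrite Cmul_conj_r. reflexivity.
Qed.

Lemma hs_inprod_scale_sum N T r (A : nat -> nat -> nat -> Cplx) :
  let S b c := Cmul (CR r) (Csum T (fun s => A s b c)) in
  hs_inprod N S S = Cmul (CR (r * r)) (Csum T (fun s => Csum T (fun s' => hs_inprod N (A s) (A s')))).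
Proof.
  intros S. unfold hs_inprod, S.
  transitivity (Csum N (fun b => Csum N (fun c => Csum T (fun s => Csum T (fun s' =>
    Cmul (CR (r * r)) (Cmul (A s b c) (Cconj (A s' b c)))))))).
  - apply Csum_ext; intros b Hb; apply Csum_ext; intros c Hc.
    rewrite Cconj_mul, Cconj_CR, Cconj_sum, CR_mul.
    transitivity (Cmul (Cmul (CR r) (CR r))
      (Cmul (Csum T (fun s => A s b c)) (Csum T (fun s' => Cconj (A s' b c))))); [ring|].
    rewrite <- Csum_prod, Csum_mul_l. apply Csum_ext; intros.
    rewrite Csum_mul_l. reflexivity.
  - rewrite (Csum_ext N _ (fun b => Csum T (fun s => Csum T (fun s' => Csum N (fun c =>
      Cmul (CR (r * r)) (Cmul (A s b c) (Cconj (A s' b c))))))))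
      by (intros; apply Csum_swap3).
    rewrite Csum_swap3, Csum_mul_l. apply Csum_ext; intros s Hs.
    rewrite Csum_mul_l. apply Csum_ext; intros s' Hs'.
    rewrite Csum_mul_l. apply Csum_ext; intros. rewrite Csum_mul_l. reflexivity.
Qed.

(* The lag |s - s'|, written with truncated subtraction. *)
Definition lag (s s' : nat) : nat := (s - s' + (s' - s))%nat.

Lemma sum_lag (h : nat -> R) T :
  Rsum T (fun s => Rsum T (fun s' => h (lag s s')))
  = INR T * h O + 2 * Rsum T (fun i => (INR T - INR (S i)) * h (S i)).
Proof.
  induction T; [simpl; ring|].
  assert (Hrow : Rsum T (fun s' => h (lag T s')) = Rsum T (fun i => h (S i))).
  { rewrite <- (Rsum_rev T (fun i => h (S i))). apply Rsum_ext; intros.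
    unfold lag; f_equal; lia. }
  assert (Hcol : Rsum T (fun s => h (lag s T)) = Rsum T (fun i => h (S i))).
  { rewrite <- Hrow. apply Rsum_ext; intros. unfold lag; f_equal; lia. }
  change (Rsum (S T) (fun s => Rsum (S T) (fun s' => h (lag s s')))) with
    (Rsum T (fun s => Rsum T (fun s' => h (lag s s')) + h (lag s T))
     + (Rsum T (fun s' => h (lag T s')) + h (lag T T))).
  change (Rsum (S T) (fun i => (INR (S T) - INR (S i)) * h (S i))) with
    (Rsum T (fun i => (INR (S T) - INR (S i)) * h (S i)) + (INR (S T) - INR (S T)) * h (S T)).
  rewrite Rsum_add, IHT, Hrow, Hcol.
  replace (lag T T) with O by (unfold lag; lia).
  rewrite (Rsum_ext T (fun i => (INR (S T) - INR (S i)) * h (S i))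
                      (fun i => (INR T - INR (S i)) * h (S i) + h (S i)))
    by (intros; rewrite (S_INR T); ring).
  rewrite Rsum_add, (S_INR T). ring.
Qed.

Section TimeAverage.
Variables (N : nat) (u : nat -> nat -> Cplx) (f : nat -> Cplx).

Definition conj_op (V : nat -> nat -> Cplx) (b c : nat) : Cplx :=
  Csum N (fun a => Cmul (Cmul (Cconj (V a b)) (f a)) (V a c)).

Definition time_avg (T : nat) (b c : nat) : Cplx :=
  Cmul (CR (1 / INR T)) (Csum T (fun s => conj_op (mpow N u s) b c)).

Definition lag_corr (t : nat) : R :=
  Rsum N (fun a => Rsum N (fun a' =>
    Cnorm2 (mpow N u t a a') * re (Cmul (Cconj (f a)) (f a')))).

Lemma inprod_conj_op ph V :
  inprod N ph (mapply N (conj_op V) ph)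
  = Csum N (fun a => Cmul (f a) (Cmul (Cconj (mapply N V ph a)) (mapply N V ph a))).
Proof.
  unfold inprod, mapply, conj_op.
  transitivity (Csum N (fun b => Csum N (fun c => Csum N (fun a =>
    Cmul (f a) (Cmul (Cconj (Cmul (V a b) (ph b))) (Cmul (V a c) (ph c))))))).
  - apply Csum_ext; intros b Hb. rewrite Csum_mul_l. apply Csum_ext; intros c Hc.
    rewrite Csum_mul_r, Csum_mul_l. apply Csum_ext; intros. rewrite Cconj_mul. ring.
  - rewrite Csum_swap3, Csum_swap3. apply Csum_ext; intros a Ha.
    rewrite Cconj_sum, <- Csum_prod, Csum_mul_l. apply Csum_ext; intros.
    symmetry; apply Csum_mul_l.
Qed.

Lemma inprod_time_avg_eigenvector T ph lam : (0 < T)%nat -> Cnorm2 lam = 1 ->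
  is_eigenvector N u lam ph ->
  inprod N ph (mapply N (time_avg T) ph) = inprod N ph (fun b => Cmul (f b) (ph b)).
Proof.
  intros HT Hlam Heig. unfold time_avg. rewrite inprod_mapply_scale_sum.
  rewrite (Csum_ext T _ (fun _ => inprod N ph (fun b => Cmul (f b) (ph b)))).
  - rewrite Csum_const. assert (INR T <> 0) by (apply not_0_INR; lia).
    apply Cplx_eq; simpl; field; auto.
  - intros s Hs. rewrite inprod_conj_op. unfold inprod. apply Csum_ext; intros a Ha.
    rewrite (mpow_eigenvector _ _ lam), Cconj_mul by auto.
    transitivity (Cmul (Cmul (Cconj (Cpow lam s)) (Cpow lam s)) (Cmul (Cconj (ph a)) (Cmul (f a) (ph a)))).
    ring. rewrite Cmul_conj_l, Cnorm2_Cpow, CR_1 by auto. ring.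
Qed.

Lemma hs_inprod_conj_op V V' :
  hs_inprod N (conj_op V) (conj_op V')
  = Csum N (fun a => Csum N (fun a' => Cmul (Cmul (f a) (Cconj (f a')))
      (Cmul (Cconj (Csum N (fun b => Cmul (V a b) (Cconj (V' a' b)))))
            (Csum N (fun c => Cmul (V a c) (Cconj (V' a' c))))))).
Proof.
  unfold hs_inprod, conj_op.
  transitivity (Csum N (fun b => Csum N (fun c => Csum N (fun a => Csum N (fun a' =>
    Cmul (Cmul (f a) (Cconj (f a')))
      (Cmul (Cconj (Cmul (V a b) (Cconj (V' a' b)))) (Cmul (V a c) (Cconj (V' a' c))))))))).
  - apply Csum_ext; intros b Hb. apply Csum_ext; intros c Hc.
    rewrite Cconj_sum, Csum_mul_r. apply Csum_ext; intros a Ha. rewrite Csum_mul_l.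
    apply Csum_ext; intros a' Ha'. rewrite !Cconj_mul, !Cconj_involutive. ring.
  - rewrite (Csum_ext N _ (fun b => Csum N (fun a => Csum N (fun a' => Csum N (fun c =>
      Cmul (Cmul (f a) (Cconj (f a')))
        (Cmul (Cconj (Cmul (V a b) (Cconj (V' a' b)))) (Cmul (V a c) (Cconj (V' a' c)))))))))
      by (intros; apply Csum_swap3).
    rewrite Csum_swap3. apply Csum_ext; intros a Ha. apply Csum_ext; intros a' Ha'.
    rewrite Cconj_sum, <- Csum_prod, Csum_mul_l. apply Csum_ext; intros.
    rewrite Csum_mul_l. reflexivity.
Qed.

Hypothesis Hrow : row_unitary N u.

(* The Gram matrix U^s (U^s')^* only depends on s - s'. *)
Lemma re_hs_inprod_conj_op_mpow s s' :
  re (hs_inprod N (conj_op (mpow N u s)) (conj_op (mpow N u s'))) = lag_corr (lag s s').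
Proof.
  rewrite hs_inprod_conj_op, re_sum. unfold lag_corr.
  destruct (Nat.le_ge_cases s' s) as [Hle|Hge].
  - replace (lag s s') with (s - s')%nat by (unfold lag; lia).
    apply Rsum_ext; intros a Ha. rewrite re_sum. apply Rsum_ext; intros a' Ha'.
    fold (gram N u s s' a a'). rewrite Cmul_conj_l.
    replace s with ((s - s') + s')%nat at 1 by lia. rewrite gram_add_l by auto.
    destruct (f a), (f a'); simpl. ring.
  - replace (lag s s') with (s' - s)%nat by (unfold lag; lia).
    rewrite Rsum_swap. apply Rsum_ext; intros a Ha. rewrite re_sum. apply Rsum_ext; intros a' Ha'.
    fold (gram N u s s' a a'). rewrite Cmul_conj_l.
    replace s' with ((s' - s) + s)%nat at 1 by lia. rewrite gram_add_r, Cnorm2_conj by auto.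
    destruct (f a), (f a'); simpl. ring.
Qed.

Lemma hs_norm_time_avg T :
  Rsum N (fun b => Rsum N (fun c => Cnorm2 (time_avg T b c)))
  = 1 / INR T * (1 / INR T) * Rsum T (fun s => Rsum T (fun s' => lag_corr (lag s s'))).
Proof.
  rewrite <- hs_inprod_self. unfold time_avg. rewrite hs_inprod_scale_sum, re_CR_mul.
  f_equal. rewrite re_sum. apply Rsum_ext; intros. rewrite re_sum. apply Rsum_ext; intros.
  apply re_hs_inprod_conj_op_mpow.
Qed.

Lemma lag_corr_0 : lag_corr 0 = Rsum N (fun a => Cnorm2 (f a)).
Proof.
  unfold lag_corr. apply Rsum_ext; intros a Ha. simpl.
  rewrite (Rsum_single _ _ a Ha).
  2: intros i _ Hi; unfold kron; destruct (Nat.eqb_spec a i); [lia|];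
     rewrite Cnorm2_C0; ring.
  unfold kron; rewrite Nat.eqb_refl, Cnorm2_Cone.
  destruct (f a); unfold Cnorm2; simpl; ring.
Qed.

End TimeAverage.

Lemma variance_le_lag_sum N u f T ph cst :
  row_unitary N u -> col_unitary N u -> (0 < T)%nat -> Csum N f = C0 ->
  orthonormal N N ph ->
  (forall j, (j < N)%nat -> exists lam, is_eigenvector N u lam (ph j)) ->
  Rsum N (fun j => Cnorm2 (Csub (inprod N (ph j) (fun b => Cmul (f b) (ph j b)))
                                (Cmul (CR cst) (Csum N f))))
  <= 1 / INR T * Rsum N (fun a => Cnorm2 (f a))
     + 2 * (1 / INR T * (1 / INR T))
         * Rsum T (fun i => (INR T - INR (S i)) * lag_corr N u f (S i)).
Proof.
  intros Hrow Hcol HT Htr Hon Heig.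
  rewrite (Rsum_ext N _ (fun j => Cnorm2 (inprod N (ph j) (mapply N (time_avg N u f T) (ph j))))).
  - eapply Rle_trans; [apply diag_entries_le_hs_norm; auto|].
    rewrite hs_norm_time_avg, sum_lag, lag_corr_0 by auto.
    assert (INR T <> 0) by (apply not_0_INR; lia).
    right. field. auto.
  - intros j Hj. destruct (Heig j Hj) as [lam Hlam].
    rewrite Htr, (inprod_time_avg_eigenvector _ _ _ _ _ lam); auto.
    + f_equal. Csimpl.
    + eapply eigenvalue_unimodular; eauto.
      rewrite Hon by auto. unfold kron; rewrite Nat.eqb_refl. reflexivity.
Qed.

Section QuantumGraph.
Variables (B : nat) (e1 e2 : nat -> nat).

Lemma ub_lt b : (b < 2 * B)%nat -> (ub B b < B)%nat.
Proof. unfold ub; destruct (Nat.ltb_spec b B); lia. Qed.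
Lemma revb_lt b : (b < 2 * B)%nat -> (revb B b < 2 * B)%nat.
Proof. unfold revb; destruct (Nat.ltb_spec b B); lia. Qed.
Lemma revb_involutive b : (b < 2 * B)%nat -> revb B (revb B b) = b.
Proof.
  unfold revb; destruct (Nat.ltb_spec b B);
    [destruct (Nat.ltb_spec (b + B) B) | destruct (Nat.ltb_spec (b - B) B)]; lia.
Qed.
Lemma revb_inj b b' : (b < 2 * B)%nat -> (b' < 2 * B)%nat -> revb B b = revb B b' -> b = b'.
Proof. intros Hb Hb' E. rewrite <- (revb_involutive b), <- (revb_involutive b'), E; auto. Qed.
Lemma ub_revb b : (b < 2 * B)%nat -> ub B (revb B b) = ub B b.
Proof.
  unfold ub, revb; destruct (Nat.ltb_spec b B);
    [destruct (Nat.ltb_spec (b + B) B) | destruct (Nat.ltb_spec (b - B) B)]; lia.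
Qed.
Lemma ub_inj b b' : (b < 2 * B)%nat -> (b' < 2 * B)%nat -> ub B b = ub B b' ->
  b = b' \/ b' = revb B b.
Proof. unfold ub, revb; destruct (Nat.ltb_spec b B), (Nat.ltb_spec b' B); lia. Qed.
Lemma tb_revb b : (b < 2 * B)%nat -> tb B e1 e2 (revb B b) = ob B e1 e2 b.
Proof.
  unfold tb, ob, revb; destruct (Nat.ltb_spec b B);
    [destruct (Nat.ltb_spec (b + B) B) | destruct (Nat.ltb_spec (b - B) B)];
    intros; try lia; f_equal; lia.
Qed.
Lemma ob_revb b : (b < 2 * B)%nat -> ob B e1 e2 (revb B b) = tb B e1 e2 b.
Proof.
  unfold tb, ob, revb; destruct (Nat.ltb_spec b B);
    [destruct (Nat.ltb_spec (b + B) B) | destruct (Nat.ltb_spec (b - B) B)];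
    intros; try lia; f_equal; lia.
Qed.
Lemma incident_tb b : (b < 2 * B)%nat -> incidentb e1 e2 (tb B e1 e2 b) (ub B b) = true.
Proof.
  unfold incidentb, tb, ub; destruct (Nat.ltb_spec b B); rewrite Nat.eqb_refl;
    auto using Bool.orb_true_r.
Qed.
Lemma incident_ob b : (b < 2 * B)%nat -> incidentb e1 e2 (ob B e1 e2 b) (ub B b) = true.
Proof.
  unfold incidentb, ob, ub; destruct (Nat.ltb_spec b B); rewrite Nat.eqb_refl;
    auto using Bool.orb_true_r.
Qed.

Variable n : nat.
Hypothesis Hg : simple_graph B e1 e2 n.

Lemma ob_lt b : (b < 2 * B)%nat -> (ob B e1 e2 b < n)%nat.
Proof. destruct Hg as [Hv _]; intros; unfold ob; destruct (Nat.ltb_spec b B); apply Hv; lia. Qed.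
Lemma tb_lt b : (b < 2 * B)%nat -> (tb B e1 e2 b < n)%nat.
Proof. destruct Hg as [Hv _]; intros; unfold tb; destruct (Nat.ltb_spec b B); apply Hv; lia. Qed.
Lemma ob_neq_tb b : (b < 2 * B)%nat -> ob B e1 e2 b <> tb B e1 e2 b.
Proof.
  destruct Hg as [Hv _]; intros; unfold ob, tb; destruct (Nat.ltb_spec b B).
  - apply Hv; lia.
  - apply not_eq_sym, Hv; lia.
Qed.

Lemma Csum_by_origin v (G : nat -> Cplx) :
  Csum (2 * B) (fun c => if Nat.eqb v (ob B e1 e2 c) then G (ub B c) else C0)
  = Csum B (fun e => if incidentb e1 e2 v e then G e else C0).
Proof.
  destruct Hg as [Hv _]. replace (2 * B)%nat with (B + B)%nat by lia.
  rewrite Csum_split, <- Csum_add. apply Csum_ext; intros e He. unfold ob, ub, incidentb.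
  destruct (Nat.ltb_spec e B), (Nat.ltb_spec (B + e) B); try lia.
  replace (B + e - B)%nat with e by lia. destruct (Hv e He) as [_ [_ Hne]].
  destruct (Nat.eqb_spec v (e1 e)), (Nat.eqb_spec v (e2 e)),
    (Nat.eqb_spec (e1 e) v), (Nat.eqb_spec (e2 e) v); simpl; try lia; Csimpl.
Qed.
Lemma Csum_by_terminus v (G : nat -> Cplx) :
  Csum (2 * B) (fun c => if Nat.eqb (tb B e1 e2 c) v then G (ub B c) else C0)
  = Csum B (fun e => if incidentb e1 e2 v e then G e else C0).
Proof.
  destruct Hg as [Hv _]. replace (2 * B)%nat with (B + B)%nat by lia.
  rewrite Csum_split, <- Csum_add. apply Csum_ext; intros e He. unfold tb, ub, incidentb.
  destruct (Nat.ltb_spec e B), (Nat.ltb_spec (B + e) B); try lia.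
  replace (B + e - B)%nat with e by lia. destruct (Hv e He) as [_ [_ Hne]].
  destruct (Nat.eqb_spec (e2 e) v), (Nat.eqb_spec (e1 e) v); simpl; try lia; Csimpl.
Qed.

(* Two distinct directed bonds with a common end lie on distinct undirected bonds. *)
Lemma kron_ub_same_tb b b' : (b < 2 * B)%nat -> (b' < 2 * B)%nat ->
  tb B e1 e2 b = tb B e1 e2 b' -> kron (ub B b') (ub B b) = kron b b'.
Proof.
  intros Hb Hb' E. unfold kron. destruct (Nat.eqb_spec b b') as [->|Hne].
  - rewrite Nat.eqb_refl; auto.
  - destruct (Nat.eqb_spec (ub B b') (ub B b)) as [Hu|]; auto.
    destruct (ub_inj b b') as [|Hrev]; auto; [lia|]. subst b'.
    rewrite tb_revb in E by auto. exfalso; exact (ob_neq_tb b Hb (eq_sym E)).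
Qed.
Lemma kron_ub_same_ob b b' : (b < 2 * B)%nat -> (b' < 2 * B)%nat ->
  ob B e1 e2 b = ob B e1 e2 b' -> kron (ub B b') (ub B b) = kron b b'.
Proof.
  intros Hb Hb' E. unfold kron. destruct (Nat.eqb_spec b b') as [->|Hne].
  - rewrite Nat.eqb_refl; auto.
  - destruct (Nat.eqb_spec (ub B b') (ub B b)) as [Hu|]; auto.
    destruct (ub_inj b b') as [|Hrev]; auto; [lia|]. subst b'.
    rewrite ob_revb in E by auto. exfalso; exact (ob_neq_tb b Hb E).
Qed.

Section Scattering.
Variable sigma : nat -> nat -> nat -> Cplx.
Hypothesis Hu : vertex_unitary B e1 e2 n sigma.

Lemma Smat_row_unitary : row_unitary (2 * B) (Smat B e1 e2 sigma).
Proof.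
  intros b b' Hb Hb'.
  destruct (Nat.eq_dec (tb B e1 e2 b) (tb B e1 e2 b')) as [E|E].
  - set (v := tb B e1 e2 b) in *.
    rewrite (Csum_ext _ _ (fun c => if Nat.eqb v (ob B e1 e2 c) then
        Cmul (sigma v (ub B c) (ub B b)) (Cconj (sigma v (ub B c) (ub B b'))) else C0)).
    + rewrite (Csum_by_origin v (fun e => Cmul (sigma v e (ub B b)) (Cconj (sigma v e (ub B b')))))
        , <- kron_ub_same_tb by auto.
      destruct (Hu v (ub B b') (ub B b)) as [Hcols _]; auto using ub_lt.
      * apply tb_lt; auto.
      * rewrite E; apply incident_tb; auto.
      * apply incident_tb; auto.
      * unfold kron. rewrite <- Hcols. apply Csum_ext; intros.
        destruct (incidentb e1 e2 v i); auto. ring.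
    + intros c Hc. unfold Smat. rewrite <- E. fold v.
      destruct (Nat.eqb v (ob B e1 e2 c)); auto. rewrite Cconj_C0; ring.
  - rewrite Csum_eq0.
    + unfold kron. destruct (Nat.eqb_spec b b'); subst; auto; lia.
    + intros c Hc. unfold Smat.
      destruct (Nat.eqb_spec (tb B e1 e2 b) (ob B e1 e2 c)),
        (Nat.eqb_spec (tb B e1 e2 b') (ob B e1 e2 c)); try lia; rewrite ?Cconj_C0; ring.
Qed.

Lemma Smat_col_unitary : col_unitary (2 * B) (Smat B e1 e2 sigma).
Proof.
  intros c c' Hc Hc'.
  destruct (Nat.eq_dec (ob B e1 e2 c) (ob B e1 e2 c')) as [E|E].
  - set (v := ob B e1 e2 c) in *.
    rewrite (Csum_ext _ _ (fun b => if Nat.eqb (tb B e1 e2 b) v then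
        Cmul (Cconj (sigma v (ub B c) (ub B b))) (sigma v (ub B c') (ub B b)) else C0)).
    + rewrite (Csum_by_terminus v (fun e => Cmul (Cconj (sigma v (ub B c) e)) (sigma v (ub B c') e)))
        , <- kron_ub_same_ob by auto.
      destruct (Hu v (ub B c') (ub B c)) as [_ Hrows]; auto using ub_lt.
      * apply ob_lt; auto.
      * rewrite E; apply incident_ob; auto.
      * apply incident_ob; auto.
      * unfold kron. rewrite <- Hrows. apply Csum_ext; intros.
        destruct (incidentb e1 e2 v i); auto. ring.
    + intros b Hb. unfold Smat. rewrite <- E. fold v.
      destruct (Nat.eqb_spec (tb B e1 e2 b) v) as [->|]; auto.
      rewrite Cconj_C0; ring.
  - rewrite Csum_eq0.
    + unfold kron. destruct (Nat.eqb_spec c c'); subst; auto; lia.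
    + intros b Hb. unfold Smat.
      destruct (Nat.eqb_spec (tb B e1 e2 b) (ob B e1 e2 c)),
        (Nat.eqb_spec (tb B e1 e2 b) (ob B e1 e2 c')); try lia; rewrite ?Cconj_C0; ring.
Qed.

Lemma Umat_row_unitary L k : row_unitary (2 * B) (Umat B e1 e2 L sigma k).
Proof.
  intros b b' Hb Hb'. unfold Umat.
  rewrite (Csum_ext _ _ (fun c => Cmul (Cmul (Cexpi (k * L (ub B b))) (Cconj (Cexpi (k * L (ub B b')))))
     (Cmul (Smat B e1 e2 sigma b c) (Cconj (Smat B e1 e2 sigma b' c)))))
    by (intros; rewrite Cconj_mul; ring).
  rewrite <- Csum_mul_l, Smat_row_unitary by auto.
  unfold kron. destruct (Nat.eqb_spec b b') as [->|]; [rewrite Cmul_Cexpi_conj|]; ring.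
Qed.

Lemma Umat_col_unitary L k : col_unitary (2 * B) (Umat B e1 e2 L sigma k).
Proof.
  intros c c' Hc Hc'. unfold Umat. rewrite <- Smat_col_unitary by auto.
  apply Csum_ext; intros. rewrite Cconj_mul.
  transitivity (Cmul (Cmul (Cexpi (k * L (ub B i))) (Cconj (Cexpi (k * L (ub B i)))))
     (Cmul (Cconj (Smat B e1 e2 sigma i c)) (Smat B e1 e2 sigma i c'))); [ring|].
  rewrite Cmul_Cexpi_conj. ring.
Qed.

End Scattering.

Lemma Cnorm2_Umat L sigma k b c : Cnorm2 (Umat B e1 e2 L sigma k b c) = Mmat B e1 e2 sigma b c.
Proof. unfold Umat, Mmat. rewrite Cnorm2_mul, Cnorm2_Cexpi. ring. Qed.

(** * Non-backtracking walks and short cycles *)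

Definition nb_step (x y : nat) : Prop :=
  (y < 2 * B)%nat /\ tb B e1 e2 x = ob B e1 e2 y /\ y <> revb B x.

Inductive walk : list nat -> nat -> nat -> Prop :=
| walk1 a : (a < 2 * B)%nat -> walk [a] a a
| walk_cons a b l c : (a < 2 * B)%nat -> nb_step a b -> walk l b c -> walk (a :: l) a c.

(* [rwalk l a c] is a walk from a to c stored backwards, so that it grows at its end c. *)
Inductive rwalk : list nat -> nat -> nat -> Prop :=
| rwalk1 a : (a < 2 * B)%nat -> rwalk [a] a a
| rwalk_snoc l a z c : rwalk l a z -> nb_step z c -> rwalk (c :: l) a c.

Lemma walk_app l1 a b : walk l1 a b -> forall l2 a' c, walk l2 a' c ->
  nb_step b a' -> walk (l1 ++ l2) a c.
Proof. induction 1; intros; simpl; econstructor; eauto. Qed.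
Lemma walk_head l a c : walk l a c -> nth 0 l O = a.
Proof. destruct 1; auto. Qed.
Lemma walk_last l a c : walk l a c -> nth (length l - 1) l O = c.
Proof.
  induction 1; simpl; auto. destruct l; [inversion H1|].
  simpl in *. rewrite Nat.sub_0_r in IHwalk. auto.
Qed.
Lemma walk_lt l a c : walk l a c -> forall x, In x l -> (x < 2 * B)%nat.
Proof. induction 1; simpl; intros x [<-|Hx]; auto; contradiction. Qed.
Lemma walk_nb_step_nth l a c : walk l a c ->
  forall i, (S i < length l)%nat -> nb_step (nth i l O) (nth (S i) l O).
Proof.
  induction 1; simpl; intros i Hi; [lia|]. destruct i.
  - erewrite walk_head; eauto.
  - apply IHwalk. lia.
Qed.
Lemma walk_length_pos l a c : walk l a c -> (0 < length l)%nat.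
Proof. destruct 1; simpl; lia. Qed.

Lemma walk_closed_is_cycle l a c : walk l a c -> nb_step c a -> is_cycle B e1 e2 l.
Proof.
  intros Hw Hca. pose proof (walk_length_pos _ _ _ Hw) as Hlen.
  split; [auto|split; [eapply walk_lt; eauto|]].
  intros i Hi. destruct (Nat.eq_dec (S i) (length l)) as [Hlast|].
  - replace ((i + 1) mod length l)%nat with O
      by (rewrite Nat.add_1_r, Hlast, Nat.Div0.mod_same; lia).
    rewrite (walk_head _ _ _ Hw). replace i with (length l - 1)%nat by lia.
    rewrite (walk_last _ _ _ Hw). destruct Hca as [_ Hca]. exact Hca.
  - rewrite Nat.mod_small, Nat.add_1_r by lia.
    destruct (walk_nb_step_nth _ _ _ Hw i) as [_ Hs]; [lia|exact Hs].
Qed.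

Lemma rwalk_lt_end l a c : rwalk l a c -> (c < 2 * B)%nat.
Proof. destruct 1 as [|? ? ? ? ? [Hc _]]; auto. Qed.
Lemma rwalk_lt_start l a c : rwalk l a c -> (a < 2 * B)%nat.
Proof. induction 1; auto. Qed.
Lemma rwalk_in_start l a c : rwalk l a c -> In a l.
Proof. induction 1; simpl; auto. Qed.
Lemma rwalk_length_pos l a c : rwalk l a c -> (0 < length l)%nat.
Proof. destruct 1; simpl; lia. Qed.

Lemma walk_rev l a c : rwalk l a c -> walk (rev l) a c.
Proof.
  induction 1 as [|l a z c Hw IH [Hc Hs]]; simpl; [constructor; auto|].
  eapply walk_app; eauto using walk1. split; auto.
Qed.

Lemma walk_reversed_bonds l a c : rwalk l a c -> walk (map (revb B) l) (revb B c) (revb B a).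
Proof.
  induction 1 as [a Ha|l a z c Hw IH [Hc [Hzc Hnb]]]; simpl.
  - constructor; apply revb_lt; auto.
  - pose proof (rwalk_lt_end _ _ _ Hw) as Hz.
    econstructor; eauto using revb_lt.
    split; [apply revb_lt; auto|].
    rewrite tb_revb, ob_revb, revb_involutive by auto. auto.
Qed.

(* Follow the first walk forwards and the second one backwards along reversed bonds from
   the point where they split; the step across the split closes a cycle. *)
Lemma rwalks_fork_cycle l1 x c : rwalk l1 x c -> forall l2 y, rwalk l2 y c ->
  length l1 = length l2 -> x <> y -> ob B e1 e2 x = ob B e1 e2 y ->
  exists p, is_cycle B e1 e2 p /\ (length p <= 2 * (length l1 - 1))%nat /\ In x p.
Proof.
  induction 1 as [x Hx | l1 x z1 c H1 IH st1]; intros l2 y H2 Hlen Hxy Ho.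
  - inversion H2 as [|l2' ? ? ? H2']; subst; [contradiction|].
    pose proof (rwalk_length_pos _ _ _ H2'). simpl in Hlen; lia.
  - inversion H2 as [? Hy' | l2' ? z2 ? H2' st2]; subst.
    + pose proof (rwalk_length_pos _ _ _ H1). simpl in Hlen; lia.
    + simpl in Hlen. destruct (Nat.eq_dec z1 z2) as [<-|Hz].
      * destruct (IH l2' y H2') as [p [Hp [Hplen Hpx]]]; auto.
        exists p. simpl. split; [|split]; auto; lia.
      * pose proof (rwalk_lt_end _ _ _ H1). pose proof (rwalk_lt_end _ _ _ H2').
        pose proof (rwalk_lt_start _ _ _ H1). pose proof (rwalk_lt_start _ _ _ H2').
        exists (rev l1 ++ map (revb B) l2').
        assert (Hw : walk (rev l1 ++ map (revb B) l2') x (revb B y)).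
        { eapply walk_app; [apply walk_rev; eauto|apply walk_reversed_bonds; eauto|].
          split; [apply revb_lt; auto|]. rewrite ob_revb by auto.
          destruct st1 as [_ [? _]], st2 as [_ [? _]]. split; [congruence|].
          intros E. apply Hz, (revb_inj z1 z2); auto. }
        split; [|split].
        -- eapply walk_closed_is_cycle; eauto.
           split; auto. rewrite tb_revb, revb_involutive; auto.
        -- rewrite length_app, length_rev, length_map. simpl. lia.
        -- apply in_or_app; left. apply -> in_rev. eapply rwalk_in_start; eauto.
Qed.

Fixpoint reaches (s a e : nat) : Prop :=
  match s with O => a = e | S s' => exists x, nb_step a x /\ reaches s' x e end.

Definition near_short_cycle (T t a : nat) : Prop :=
  exists s, (s < t)%nat /\ exists e, (e < 2 * B)%nat /\
    on_short_cycle B e1 e2 (2 * T) (ub B e) /\ reaches (S s) a e.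

Section Walks.
Variables (L : nat -> R) (sigma : nat -> nat -> nat -> Cplx) (k : R).
Hypothesis Hnb : no_backscattering B e1 e2 n sigma.

Local Notation U := (Umat B e1 e2 L sigma k).

Lemma Umat_neq0_nb_step x y : (x < 2 * B)%nat -> (y < 2 * B)%nat -> U x y <> C0 -> nb_step x y.
Proof.
  intros Hx Hy H. unfold Umat, Smat in H.
  destruct (Nat.eqb_spec (tb B e1 e2 x) (ob B e1 e2 y)) as [E|]; [|exfalso; apply H; Csimpl].
  split; [auto|split; [auto|]]. intros ->. apply H.
  rewrite ub_revb, Hnb by auto using tb_lt, ub_lt, incident_tb. Csimpl.
Qed.

Lemma mpow_neq0_rwalk t x c : (x < 2 * B)%nat -> (c < 2 * B)%nat ->
  mpow (2 * B) U t x c <> C0 -> exists l, rwalk l x c /\ length l = S t.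
Proof.
  revert c; induction t; intros c Hx Hc H.
  - simpl in H. unfold kron in H. destruct (Nat.eqb_spec x c) as [<-|]; [|contradiction].
    exists [x]; split; auto using rwalk1.
  - rewrite mpow_S_r in H by auto. apply Csum_neq0 in H as [z [Hz H]].
    apply Cmul_neq0 in H as [H1 H2].
    destruct (IHt z Hx Hz H1) as [l [Hl Hlen]]. exists (c :: l). split.
    + econstructor; eauto. apply Umat_neq0_nb_step; auto.
    + simpl; auto.
Qed.

(* Two nonzero terms of (U^(t+1))_{ac} = sum_x U_{ax} (U^t)_{xc} come from two walks
   that fork at a, which closes a cycle of length <= 2t. *)
Lemma mpow_S_single_support T t a c : (t < T)%nat -> (a < 2 * B)%nat -> (c < 2 * B)%nat ->
  ~ near_short_cycle T (S t) a -> forall x y, (x < 2 * B)%nat -> (y < 2 * B)%nat -> x <> y ->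
  Cmul (U a x) (mpow (2 * B) U t x c) = C0 \/ Cmul (U a y) (mpow (2 * B) U t y c) = C0.
Proof.
  intros Ht Ha Hc Hfar x y Hx Hy Hxy.
  destruct (excluded_middle_informative (Cmul (U a x) (mpow (2 * B) U t x c) = C0)); auto.
  destruct (excluded_middle_informative (Cmul (U a y) (mpow (2 * B) U t y c) = C0)); auto.
  exfalso. apply Cmul_neq0 in n0 as [Ux Px], n1 as [Uy Py].
  apply Umat_neq0_nb_step in Ux, Uy; auto.
  destruct (mpow_neq0_rwalk t x c Hx Hc Px) as [l1 [Hl1 Hn1]].
  destruct (mpow_neq0_rwalk t y c Hy Hc Py) as [l2 [Hl2 Hn2]].
  destruct (rwalks_fork_cycle l1 x c Hl1 l2 y Hl2) as [p [Hp [Hplen Hpx]]]; auto.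
  - congruence.
  - destruct Ux as [_ [? _]], Uy as [_ [? _]]; congruence.
  - apply Hfar. exists O. split; [lia|]. exists x. split; [auto|split].
    + exists p, x. rewrite Hn1 in Hplen. split; [exact Hp|split; [lia|auto]].
    + exists x. split; auto. reflexivity.
Qed.

Lemma Cnorm2_mpow_far_from_cycles T t a c : (t <= T)%nat -> (a < 2 * B)%nat ->
  (c < 2 * B)%nat -> ~ near_short_cycle T t a ->
  Cnorm2 (mpow (2 * B) U t a c) = Mpow B e1 e2 sigma t a c.
Proof.
  revert a; induction t; intros a Ht Ha Hc Hfar; simpl.
  - unfold kron. destruct (Nat.eqb a c); [apply Cnorm2_Cone|apply Cnorm2_C0].
  - rewrite Cnorm2_Csum_single_support by (apply (mpow_S_single_support T); auto; lia).
    apply Rsum_ext; intros x Hx. rewrite Cnorm2_mul, Cnorm2_Umat.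
    destruct (excluded_middle_informative (U a x = C0)) as [E|E].
    + rewrite <- (Cnorm2_Umat L sigma k), E, Cnorm2_C0. ring.
    + rewrite IHt; auto; [lia|]. intros [s [Hs [e [He [Hcyc Hreach]]]]].
      apply Hfar. exists (S s). split; [lia|]. exists e. repeat split; auto.
      exists x. split; auto. apply Umat_neq0_nb_step; auto.
Qed.

End Walks.

Lemma count_tb_eq_degree v : countP (2 * B) (fun a => tb B e1 e2 a = v) = degree B e1 e2 v.
Proof.
  destruct Hg as [Hv _]. unfold degree. rewrite countP_filter.
  replace (2 * B)%nat with (B + B)%nat by lia. rewrite countP_split.
  rewrite (countP_ext B (fun e => incidentb e1 e2 v e = true) (fun e => e2 e = v \/ e1 e = v))
    by (intros; unfold incidentb; rewrite Bool.orb_true_iff, !Nat.eqb_eq; tauto).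
  rewrite countP_disj.
  - f_equal; apply countP_ext; intros i Hi; unfold tb.
    + destruct (Nat.ltb_spec i B); [tauto|lia].
    + destruct (Nat.ltb_spec (B + i) B); [lia|]. replace (B + i - B)%nat with i by lia. tauto.
  - intros i Hi [E2 E1]. destruct (Hv i Hi) as [_ [_ Hne]]. congruence.
Qed.

Section Regular.
Variable d : nat.
Hypothesis Hreg : regular B e1 e2 n d.

(* All bonds into ob x except revb x may precede x. *)
Lemma count_nb_step_into_le x : (x < 2 * B)%nat ->
  (countP (2 * B) (fun a => nb_step a x) <= d - 1)%nat.
Proof.
  intros Hx.
  eapply Nat.le_trans.
  - apply (countP_le _ _ (fun a => tb B e1 e2 a = ob B e1 e2 x /\ a <> revb B x)).
    intros a Ha [_ [Ht Hn]]. split; auto. intros ->. apply Hn. rewrite revb_involutive; auto.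
  - pose proof (countP_remove (2 * B) (fun a => tb B e1 e2 a = ob B e1 e2 x) (revb B x)
      (revb_lt x Hx) (tb_revb x Hx)) as Hrem.
    rewrite count_tb_eq_degree, Hreg in Hrem by (apply ob_lt; auto). lia.
Qed.

Lemma count_reaches_le s e : (e < 2 * B)%nat ->
  (countP (2 * B) (fun a => reaches s a e) <= Nat.pow (d - 1) s)%nat.
Proof.
  intros He; induction s; simpl.
  - apply countP_eq_le_1.
  - rewrite (countP_ext _ _ (fun a => exists x, (x < 2 * B)%nat /\ reaches s x e /\ nb_step a x)).
    + eapply Nat.le_trans; [apply countP_exists_le; intros; apply count_nb_step_into_le; auto|].
      rewrite Nat.mul_comm. apply Nat.mul_le_mono_l; auto.
    + intros a _; split.
      * intros [x [Hs Hr]]. exists x. split; [apply Hs|auto].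
      * intros [x [_ [Hr Hs]]]; eauto.
Qed.

Lemma count_on_short_cycle_directed T :
  countP (2 * B) (fun e => on_short_cycle B e1 e2 (2 * T) (ub B e))
  = (2 * card_CBt B e1 e2 (2 * T))%nat.
Proof.
  unfold card_CBt. replace (2 * B)%nat with (B + B)%nat by lia. rewrite countP_split.
  rewrite (countP_ext B (fun e => on_short_cycle B e1 e2 (2 * T) (ub B e))
                        (on_short_cycle B e1 e2 (2 * T)))
    by (intros i Hi; unfold ub; destruct (Nat.ltb_spec i B); [tauto|lia]).
  rewrite (countP_ext B (fun i => on_short_cycle B e1 e2 (2 * T) (ub B (B + i)))
                        (on_short_cycle B e1 e2 (2 * T))).
  - lia.
  - intros i Hi; unfold ub; destruct (Nat.ltb_spec (B + i) B); [lia|].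
    replace (B + i - B)%nat with i by lia. tauto.
Qed.

Lemma count_near_short_cycle_le T t : (3 <= d)%nat ->
  INR (countP (2 * B) (near_short_cycle T t))
  <= 4 * INR (card_CBt B e1 e2 (2 * T)) * (INR d - 1) ^ t.
Proof.
  intros Hd. unfold near_short_cycle.
  eapply Rle_trans; [apply INR_countP_exists_le|].
  assert (Hd1 : INR (d - 1) = INR d - 1) by (rewrite minus_INR by lia; simpl; ring).
  eapply Rle_trans.
  - apply Rsum_le with (G := fun s => INR (2 * card_CBt B e1 e2 (2 * T)) * (INR d - 1) ^ (S s)).
    intros s Hs. rewrite <- Hd1, <- pow_INR, <- mult_INR. apply le_INR.
    rewrite <- count_on_short_cycle_directed.
    apply countP_exists_le. intros; apply count_reaches_le; auto.
  - rewrite <- Rsum_mul_l, mult_INR. simpl (INR 2).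
    assert (Hr : 2 <= INR d - 1) by (apply le_INR in Hd; simpl in Hd; lra).
    pose proof (sum_pow_le _ t Hr). pose proof (pos_INR (card_CBt B e1 e2 (2 * T))). nra.
Qed.

End Regular.

Lemma Mpow_nonneg sigma t a c : 0 <= Mpow B e1 e2 sigma t a c.
Proof.
  revert a; induction t; intros a; simpl.
  - destruct (Nat.eqb a c); lra.
  - apply Rsum_nonneg; intros. apply Rmult_le_pos; auto. apply Cnorm2_nonneg.
Qed.

Lemma Mpow_row_sum sigma : vertex_unitary B e1 e2 n sigma ->
  forall t a, (a < 2 * B)%nat -> Rsum (2 * B) (fun c => Mpow B e1 e2 sigma t a c) = 1.
Proof.
  intros Hu; induction t; intros a Ha; simpl.
  - rewrite (Rsum_single _ _ a Ha), Nat.eqb_refl; auto.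
    intros i _ Hi. destruct (Nat.eqb_spec a i); [lia|auto].
  - rewrite Rsum_swap, (Rsum_ext _ _ (fun x => Mmat B e1 e2 sigma a x))
      by (intros; rewrite <- Rsum_mul_l, IHt by auto; ring).
    pose proof (Smat_row_unitary sigma Hu a a Ha Ha) as Hrow.
    unfold kron in Hrow; rewrite Nat.eqb_refl in Hrow.
    rewrite (Csum_ext _ _ (fun c => CR (Mmat B e1 e2 sigma a c))) in Hrow
      by (intros; apply Cmul_conj_r).
    rewrite <- CR_sum in Hrow. apply (f_equal re) in Hrow. exact Hrow.
Qed.

Lemma re_f_Mt_f sigma t f :
  re (f_Mt_f B e1 e2 sigma t f) = Rsum (2 * B) (fun a => Rsum (2 * B) (fun a' =>
    Mpow B e1 e2 sigma t a a' * re (Cmul (Cconj (f a)) (f a')))).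
Proof.
  unfold f_Mt_f, cinner. rewrite re_sum. apply Rsum_ext; intros.
  rewrite Csum_mul_l, re_sum. apply Rsum_ext; intros. destruct (f i), (f i0); simpl. ring.
Qed.

(* Rows a far from short cycles contribute exactly as in <f, M^t f>; each other row
   contributes at most 2 kappa^2, as both |U^t|^2 and M^t are stochastic in the row. *)
Lemma lag_corr_le d L sigma k T t f kappa : (3 <= d)%nat -> regular B e1 e2 n d ->
  vertex_unitary B e1 e2 n sigma -> no_backscattering B e1 e2 n sigma -> (t <= T)%nat ->
  0 < kappa -> (forall b, (b < 2 * B)%nat -> Cabs (f b) <= kappa) ->
  lag_corr (2 * B) (Umat B e1 e2 L sigma k) f t
  <= re (f_Mt_f B e1 e2 sigma t f)
     + 8 * kappa ^ 2 * (INR d - 1) ^ t * INR (card_CBt B e1 e2 (2 * T)).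
Proof.
  intros Hd Hreg Hu Hnb Ht Hk Hf. set (U := Umat B e1 e2 L sigma k).
  set (cf a a' := re (Cmul (Cconj (f a)) (f a'))).
  rewrite re_f_Mt_f. unfold lag_corr. fold cf.
  rewrite (Rsum_ext _ _ (fun a =>
      Rsum (2 * B) (fun a' => Mpow B e1 e2 sigma t a a' * cf a a')
      + Rsum (2 * B) (fun a' => (Cnorm2 (mpow (2 * B) U t a a') - Mpow B e1 e2 sigma t a a') * cf a a')))
    by (intros; rewrite <- Rsum_add; apply Rsum_ext; intros; unfold cf; ring).
  rewrite Rsum_add. apply Rplus_le_compat_l.
  eapply Rle_trans.
  - apply Rsum_le_countP with (P := near_short_cycle T t) (K := 2 * (kappa * kappa)); [nra| |].
    + intros a Ha Hfar. right. apply Rsum_eq0; intros a' Ha'.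
      unfold U; rewrite (Cnorm2_mpow_far_from_cycles L sigma k Hnb T) by auto. ring.
    + intros a Ha _.
      apply Rle_trans with (Rsum (2 * B) (fun a' =>
        kappa * kappa * Cnorm2 (mpow (2 * B) U t a a') + kappa * kappa * Mpow B e1 e2 sigma t a a')).
      * apply Rsum_le; intros a' Ha'.
        pose proof (re_Cmul_conj_le (f a) (f a') kappa (Hf a Ha) (Hf a' Ha')).
        pose proof (Cnorm2_nonneg (mpow (2 * B) U t a a')).
        pose proof (Mpow_nonneg sigma t a a').
        pose proof (Rle_abs (cf a a')). pose proof (Rle_abs (- cf a a')).
        rewrite Rabs_Ropp in *. unfold cf in *.
        destruct (Rle_dec 0 (Cnorm2 (mpow (2 * B) U t a a') - Mpow B e1 e2 sigma t a a')); nra.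
      * right. rewrite Rsum_add, <- !Rsum_mul_l, mpow_row_norm, Mpow_row_sum by
          (auto; apply Umat_row_unitary; auto). ring.
  - pose proof (count_near_short_cycle_le d Hreg T t Hd).
    replace (kappa ^ 2) with (kappa * kappa) by ring.
    assert (0 <= INR (card_CBt B e1 e2 (2 * T)) * (INR d - 1) ^ t).
    { apply Rmult_le_pos; [apply pos_INR|]. apply pow_le. apply le_INR in Hd. simpl in Hd. lra. }
    nra.
Qed.

End QuantumGraph.

(** * Averaging over k *)

Lemma time_avg_limit_le g l M : time_avg_limit g l -> (forall k, g k <= M) -> l <= M.
Proof.
  intros [Hint Hlim] Hg. apply Rnot_lt_le; intros Hlt.
  destruct (Hlim ((l - M) / 2) ltac:(lra)) as [K0 HK].
  set (K := Rmax K0 0 + 1).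
  assert (HK0 : K0 < K) by (unfold K; pose proof (Rmax_l K0 0); lra).
  assert (HKpos : 0 < K) by (unfold K; pose proof (Rmax_r K0 0); lra).
  destruct (Hint K HKpos) as [pr].
  specialize (HK K pr HK0 HKpos).
  assert (Hle : RiemannInt pr <= M * K).
  { pose proof (RiemannInt_P19 pr (RiemannInt_P14 0 K M) ltac:(lra) (fun x _ => Hg x)) as H.
    rewrite RiemannInt_P15 in H. lra. }
  assert (RiemannInt pr / K <= M).
  { unfold Rdiv. apply Rmult_le_reg_r with K; auto. rewrite Rmult_assoc, Rinv_l by lra. lra. }
  apply Rabs_def2 in HK. lra.
Qed.

Lemma w_hat_S T i : (S i <= T)%nat -> w_hat T (INR (S i)) = 1 / INR T * (1 / INR T) * (INR T - INR (S i)).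
Proof.
  intros Hi. apply le_INR in Hi. unfold w_hat. rewrite Rabs_pos_eq by apply pos_INR.
  destruct (Rlt_dec (INR (S i)) (INR T)).
  - assert (0 < INR T) by (pose proof (pos_INR (S i)); simpl in *; lra). field. lra.
  - replace (INR T - INR (S i)) with 0 by lra. ring.
Qed.

Lemma V_integrand_le d n B e1 e2 L sigma T kappa f phi k : (3 <= d)%nat ->
  simple_graph B e1 e2 n -> regular B e1 e2 n d -> vertex_unitary B e1 e2 n sigma ->
  no_backscattering B e1 e2 n sigma -> (0 < T)%nat -> 0 < kappa ->
  (forall b, (b < 2 * B)%nat -> Cabs (f b) <= kappa) -> TrOp B f = C0 ->
  is_onb_eigenbasis B (Umat B e1 e2 L sigma k) (phi k) ->
  V_integrand B f phi k
  <= 1 / INR T * Rsum (2 * B) (fun b => Cnorm2 (f b))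
     + 2 * Rsum T (fun i => w_hat T (INR (S i)) *
             (re (f_Mt_f B e1 e2 sigma (S i) f)
              + 8 * kappa ^ 2 * (INR d - 1) ^ (S i) * INR (card_CBt B e1 e2 (2 * T)))).
Proof.
  intros Hd Hg Hreg Hu Hnb HT Hk Hf Htr [Hon Heig].
  eapply Rle_trans.
  - apply (variance_le_lag_sum (2 * B) (Umat B e1 e2 L sigma k) f T (phi k));
      eauto using Umat_row_unitary, Umat_col_unitary.
  - apply Rplus_le_compat_l. rewrite !Rsum_mul_l. apply Rsum_le; intros i Hi.
    rewrite w_hat_S by lia.
    pose proof (lag_corr_le B e1 e2 n Hg d L sigma k T (S i) f kappa Hd Hreg Hu Hnb
      ltac:(lia) Hk Hf) as Hlag.
    assert (HTi : 0 <= INR T - INR (S i)) by (apply le_INR in Hi; rewrite S_INR in *; lra).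
    assert (HT2 : 0 < 1 / INR T * (1 / INR T))
      by (assert (0 < INR T) by (apply lt_0_INR; lia); apply Rmult_lt_0_compat; apply Rdiv_lt_0_compat; lra).
    match goal with |- _ <= 2 * (?c * ?D * ?X) =>
      replace (2 * (c * D * X)) with (2 * c * (D * X)) by ring end.
    apply Rmult_le_compat_l; [lra|]. apply Rmult_le_compat_l; lra.
Qed.

Theorem proposition4 :
  forall d : nat, (3 <= d)%nat ->
  exists c : R,
  forall (n B : nat) (e1 e2 : nat -> nat) (L : nat -> R)
         (sigma : nat -> nat -> nat -> Cplx) (T : nat) (kappa : R) (f : nat -> Cplx)
         (phi : R -> nat -> nat -> Cplx) (lim : R),
    (0 < B)%nat ->
    simple_graph B e1 e2 n ->
    regular B e1 e2 n d ->
    (forall e, (e < B)%nat -> 0 < L e) ->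
    vertex_unitary B e1 e2 n sigma ->
    no_backscattering B e1 e2 n sigma ->
    (0 < T)%nat ->
    0 < kappa ->
    (forall b, (b < 2 * B)%nat -> Cabs (f b) <= kappa) ->
    TrOp B f = C0 ->
    (forall k, is_onb_eigenbasis B (Umat B e1 e2 L sigma k) (phi k)) ->
    time_avg_limit (V_integrand B f phi) lim ->
    lim / (2 * INR B)
      <= 1 / (2 * INR B * INR T) * Rsum (2 * B) (fun b => Cnorm2 (f b))
         + 1 / INR B *
           Rsum T (fun i =>
             w_hat T (INR (S i)) *
             (re (f_Mt_f B e1 e2 sigma (S i) f)
              + c * kappa ^ 2 * (INR d - 1) ^ (S i)
                  * INR (card_CBt B e1 e2 (2 * T)))).
Proof.
  intros d Hd. exists 8.
  intros n B e1 e2 L sigma T kappa f phi lim HB Hg Hreg _ Hu Hnb HT Hk Hf Htr Heig Hlim.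
  pose proof (time_avg_limit_le _ _ _ Hlim
    (fun k => V_integrand_le d n B e1 e2 L sigma T kappa f phi k Hd Hg Hreg Hu Hnb HT Hk Hf Htr
                (Heig k))) as Hle.
  assert (0 < INR B) by (apply lt_0_INR; lia).
  assert (0 < INR T) by (apply lt_0_INR; lia).
  apply Rmult_le_reg_l with (2 * INR B); [lra|].
  replace (2 * INR B * (lim / (2 * INR B))) with lim by (field; lra).
  eapply Rle_trans; [exact Hle|]. right. field. lra.
Qed.
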